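(* Consider the simultaneous block-fading binary symmetric wiretap channel with parameters $q_1\in[0,1]$, $q_2=1-q_1$, and crossover probabilities satisfying $p_1\le p_2\le 0.5$, $p_1^*\le p_2^*\le 0.5$, $p_1\le p_1^*$, $p_2\le p_2^*$. Its secrecy capacity with channel state information available only at the decoders satisfies $$C^s_{\textrm{CSI-D}}\le q_1[H(p_1^* )-H(p_1)]+q_2[H(p_2^* )-H(p_2)].$$
   Context: $H(p)=-p\log_2 p-(1-p)\log_2(1-p)$ is the binary entropy function, and BSC$(p)$ denotes the binary symmetric channel with crossover probability $p$. Simultaneous block-fading binary symmetric wiretap channel: the transmitter (Alice) sends $NB$ binary symbols $X_{1:NB}$ organized in $B$ fading blocks of length $N$. Each block $k$ has a fading state $S_k\in\{1,2\}$, constant within the block, with $\Pr(S_k=1)=q_1$, $\Pr(S_k=2)=q_2$, states independent across blocks. Within block $k$, the legitimate receiver (Bob) observes the output $Y$ of $N$ independent uses of BSC$(p_{S_k})$, and the eavesdropper (Eve) observes the output $Z$ of $N$ independent uses of BSC$(p^*_{S_k})$ (same state for both, i.e. simultaneous fading). Let $\mathsf{S}=(S_1,\dots,S_B)$. A code consists of a (possibly randomized) encoder $X_{1:NB}=f(\mathsf{M})$ of a uniformly distributed message $\mathsf{M}$, which knows only the state distribution (not the realizations), and a decoder $\hat{\mathsf{M}}=g(Y_{1:NB},\mathsf{S})$ that knows the states; its rate is $\frac{1}{NB}\log_2$ of the message-set size. A rate $R$ is achievable if there are such codes of rate at least $R$ (asymptotically) with $N,B\to\infty$ such that $\Pr\{\mathsf{M}\ne\hat{\mathsf{M}}\}\to0$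 (reliability) and $\frac{1}{NB}I(\mathsf{M};Z_{1:NB}\mid\mathsf{S})\to 0$ (weak secrecy). $C^s_{\textrm{CSI-D}}$ is the supremum of achievable rates. *)

From HB Require Import structures.
From mathcomp Require Import all_boot all_order all_algebra.
From mathcomp Require Import all_classical all_reals all_analysis.
Set Implicit Arguments. Unset Strict Implicit. Unset Printing Implicit Defensive.
Import Order.TTheory GRing.Theory Num.Theory.
Local Open Scope ring_scope.
Local Open Scope classical_set_scope.

Section BFWiretap.
Variable R : realType.

Definition log2 (x : R) : R := ln x / ln 2.

Definition xlog2x (x : R) : R := if x == 0 then 0 else x * log2 x.

Definition Hb (p : R) : R := - xlog2x p - xlog2x (1 - p).

(** Fading states: [false] = state 1, [true] = state 2. *)
Definition st_prob (q1 : R) (s : bool) : R := if s then 1 - q1 else q1.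
Definition xover (pa pb : R) (s : bool) : R := if s then pb else pa.

(** NB symbols, organised in B blocks of length N: symbol (k, j) is the
    j-th symbol of block k. *)
Definition word (N B : nat) := {ffun 'I_B * 'I_N -> bool}.
Definition states (B : nat) := {ffun 'I_B -> bool}.

Definition Pstate (q1 : R) B (s : states B) : R :=
  \prod_(k : 'I_B) st_prob q1 (s k).

(** Transition probability of the block-fading BSC: within block k,
    N independent uses of BSC(p_{s_k}), with p_1 = pa and p_2 = pb. *)
Definition Wbf (pa pb : R) N B (s : states B) (x y : word N B) : R :=
  \prod_(i : 'I_B * 'I_N)
     (if x i == y i then 1 - xover pa pb (s i.1) else xover pa pb (s i.1)).

(** A code: a randomized encoder (a probability distribution on the NB
    channel inputs for each message, not depending on the states) and a
    decoder that sees Bob's output and the state sequence. *)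
Record code (N B M : nat) := Code {
  enc : 'I_M -> word N B -> R;
  enc_ge0 : forall m x, 0 <= enc m x;
  enc_sum1 : forall m, \sum_(x : word N B) enc m x = 1;
  dec : word N B -> states B -> 'I_M }.

Definition rate (N B M : nat) : R := log2 M%:R / (N * B)%:R.

Definition err_prob (q1 p1 p2 : R) N B M (c : code N B M) : R :=
  \sum_(m : 'I_M) \sum_(s : states B) \sum_(x : word N B) \sum_(y : word N B)
    (M%:R)^-1 * Pstate q1 s * enc c m x * Wbf p1 p2 s x y
      * (dec c y s != m)%:R.

Definition PZ (ps1 ps2 : R) N B M (c : code N B M) (m : 'I_M) (s : states B)
  (z : word N B) : R :=
  \sum_(x : word N B) enc c m x * Wbf ps1 ps2 s x z.

Definition PZs (ps1 ps2 : R) N B M (c : code N B M) (s : states B)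
  (z : word N B) : R :=
  (M%:R)^-1 * \sum_(m : 'I_M) PZ ps1 ps2 c m s z.

Definition ilog (a b : R) : R := if a == 0 then 0 else a * log2 (a / b).

(** I(M ; Z_{1:NB} | S) in bits, for a uniform message *)
Definition leakage (q1 ps1 ps2 : R) N B M (c : code N B M) : R :=
  \sum_(s : states B) Pstate q1 s *
    \sum_(m : 'I_M) \sum_(z : word N B)
       (M%:R)^-1 * ilog (PZ ps1 ps2 c m s z) (PZs ps1 ps2 c s z).

(** R is an achievable secrecy rate: there are codes with N, B -> oo whose
    rates are asymptotically at least R, with vanishing error probability
    and vanishing normalized leakage (weak secrecy). *)
Definition achievable (q1 p1 p2 ps1 ps2 : R) (r : R) : Prop :=
  forall eps : R, 0 < eps -> forall N0 B0 : nat,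
    exists N B M : nat, exists c : code N B M,
      [/\ (N0 <= N)%N, (B0 <= B)%N & (0 < M)%N] /\
      [/\ r - eps <= rate N B M,
           err_prob q1 p1 p2 c <= eps &
           leakage q1 ps1 ps2 c / (N * B)%:R <= eps].

Definition CsCSID (q1 p1 p2 ps1 ps2 : R) : \bar R :=
  ereal_sup [set (r%:E)%E | r in achievable q1 p1 p2 ps1 ps2].

End BFWiretap.

(* For a fixed state sequence s, Eve's crossover p' satisfies p' = p + c - 2 p c
   for some c in [0, 1], so Eve's block channel is Bob's followed by
   independent BSCs, a doubly stochastic channel.  Hence H(Y | s) <= H(Z | s)
   and, by data processing, I(M ; Y | s) - I(M ; Z | s) <= H(Z | X, s) - H(Y | X, s),
   the sum of H(p'_k) - H(p_k) over the NB symbols.  Fano's inequality bounds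
   I(M ; Y | s) below by (1 - P_e) log M - 1.  Averaging over s gives
   (1 - P_e) log M <= 1 + leakage + NB (q1 (H(p1') - H(p1)) + q2 (H(p2') - H(p2))),
   and vanishing error and normalized leakage bound every achievable rate. *)

From Pilot Require Import Defs.
From HB Require Import structures.
From mathcomp Require Import all_boot all_order all_algebra.
From mathcomp Require Import all_classical all_reals all_analysis.
From mathcomp Require Import ring lra.
Set Implicit Arguments. Unset Strict Implicit. Unset Printing Implicit Defensive.
Import Order.TTheory GRing.Theory Num.Theory.
Local Open Scope ring_scope.

Section Log2.
Variable R : realType.
Implicit Types a b x : R.

Lemma ln2_gt0 : 0 < ln (2 : R).
Proof. by apply: ln_gt0; rewrite ltr1n. Qed.

Lemma xlog2xE x : xlog2x x = x * log2 x.
Proof. by rewrite /xlog2x; case: eqP => [->|]; rewrite ?mul0r. Qed.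

Lemma ilogE a b : ilog a b = a * log2 (a / b).
Proof. by rewrite /ilog; case: eqP => [->|]; rewrite ?mul0r. Qed.

Lemma log21 : log2 (1 : R) = 0.
Proof. by rewrite /log2 ln1 mul0r. Qed.

Lemma log22 : log2 (2 : R) = 1.
Proof. by rewrite /log2 divff // gt_eqF // ln2_gt0. Qed.

Lemma log2M a b : 0 < a -> 0 < b -> log2 (a * b) = log2 a + log2 b.
Proof. by move=> a0 b0; rewrite /log2 lnM ?posrE // mulrDl. Qed.

Lemma log2_div a b : 0 < a -> 0 < b -> log2 (a / b) = log2 a - log2 b.
Proof. by move=> a0 b0; rewrite /log2 ln_div ?posrE // mulrBl. Qed.

Lemma log2_prod (I : finType) (g : I -> R) :
  (forall i, 0 < g i) -> log2 (\prod_i g i) = \sum_i log2 (g i).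
Proof.
move=> g0; suff : 0 < \prod_i g i /\ log2 (\prod_i g i) = \sum_i log2 (g i).
  by case.
apply: (big_rec2 (fun x y => 0 < x /\ log2 x = y)); first by rewrite log21.
by move=> i x y _ [x0 <-]; rewrite mulr_gt0 // log2M.
Qed.

Lemma log2_le0 x : x <= 1 -> log2 x <= 0.
Proof. by move=> x1; rewrite /log2 pmulr_lle0 ?invr_gt0 ?ln2_gt0 // ln_le0. Qed.

Lemma log2_le_lin x : 0 < x -> log2 x <= (x - 1) / ln 2.
Proof.
move=> x0; rewrite /log2 ler_pM2r ?invr_gt0 ?ln2_gt0 //.
by have := @le_ln1Dx R (x - 1); rewrite addrCA subrr addr0; apply; lra.
Qed.

Lemma ilogZ (c : R) a b : 0 <= c -> ilog (c * a) (c * b) = c * ilog a b.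
Proof.
move=> c0; rewrite !ilogE; have [->|cn0] := eqVneq c 0; first by rewrite !mul0r.
have -> : c * a / (c * b) = a / b by rewrite invfM mulrACA divff // mul1r.
by rewrite mulrA.
Qed.

Lemma ilogV a b : 0 <= a -> 0 < b -> ilog a b^-1 = xlog2x a + a * log2 b.
Proof.
move=> a0 b0; rewrite ilogE xlog2xE; have [->|an0] := eqVneq a 0.
  by rewrite !mul0r addr0.
by rewrite invrK log2M ?mulrDr // lt_def an0.
Qed.

Lemma xlog2x_le_ilog a b : 0 <= a -> 0 <= b -> b <= 1 -> (a != 0 -> b != 0) ->
  xlog2x a <= ilog a b.
Proof.
move=> a0 b0 b1 ab; rewrite ilogE xlog2xE; have [->|an0] := eqVneq a 0.
  by rewrite !mul0r.
have ap : 0 < a by rewrite lt_def an0.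
have bp : 0 < b by rewrite lt_def ab.
by rewrite log2_div // ler_pM2l //; have := log2_le0 b1; lra.
Qed.

(* [ln y <= y - 1] at [y = b x / a]; summed with [x = A / B] for the totals
   [A] and [B], it gives the log-sum inequality. *)
Lemma ilog_ge_linear a b x : 0 <= a -> 0 <= b -> (a != 0 -> b != 0) -> 0 < x ->
  a * log2 x + (a - b * x) / ln 2 <= ilog a b.
Proof.
move=> a0 b0 ab x0; have l2 := ln2_gt0.
have [->|an0] := eqVneq a 0.
  rewrite /ilog eqxx mul0r add0r sub0r mulNr oppr_le0.
  by rewrite divr_ge0 ?mulr_ge0 // ltW.
have ap : 0 < a by rewrite lt_def an0.
have bp : 0 < b by rewrite lt_def ab.
pose t := b * x / a.
have tp : 0 < t by rewrite divr_gt0 // mulr_gt0.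
rewrite ilogE (_ : a / b = x / t); last by rewrite /t; field; rewrite ?gt_eqF.
have : a * log2 t <= a * ((t - 1) / ln 2) by rewrite ler_pM2l // log2_le_lin.
have -> : a * ((t - 1) / ln 2) = (b * x - a) / ln 2.
  by rewrite /t; field; rewrite !gt_eqF.
rewrite log2_div // mulrBr.
have -> : (a - b * x) / ln 2 = - ((b * x - a) / ln 2) by field; rewrite gt_eqF.
by move=> h; rewrite lerD2l lerN2.
Qed.

Lemma ler_sum_term (I : finType) (F : I -> R) i :
  (forall j, 0 <= F j) -> F i <= \sum_j F j.
Proof. by move=> F0; rewrite (bigD1 i) //= lerDl sumr_ge0. Qed.

Lemma sum_pairE (I J : finType) (F : I * J -> R) :
  \sum_p F p = \sum_i \sum_j F (i, j).
Proof. by rewrite pair_bigA; apply: eq_bigr => -[]. Qed.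

Lemma psumr_neq0_supp (I : finType) (P : pred I) (a b : I -> R) :
  (forall i, 0 <= b i) -> (forall i, a i != 0 -> b i != 0) ->
  \sum_(i | P i) a i != 0 -> \sum_(i | P i) b i != 0.
Proof.
move=> b0 ab; apply: contra => /eqP /(psumr_eq0P (fun i _ => b0 i)) bz.
by apply/eqP/big1 => i Pi; apply/eqP/negPn/negP => /ab; rewrite bz ?eqxx.
Qed.

Lemma log_sum_ineq (I : finType) (P : pred I) (a b : I -> R) :
  (forall i, 0 <= a i) -> (forall i, 0 <= b i) ->
  (forall i, a i != 0 -> b i != 0) ->
  ilog (\sum_(i | P i) a i) (\sum_(i | P i) b i) <= \sum_(i | P i) ilog (a i) (b i).
Proof.
move=> a0 b0 ab.
have [Ae|An0] := eqVneq (\sum_(i | P i) a i) 0.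
  have az := psumr_eq0P (fun i _ => a0 i) Ae.
  by rewrite Ae /ilog eqxx big1 // => i Pi; rewrite az ?eqxx.
have Bn0 := psumr_neq0_supp b0 ab An0.
have Ap : 0 < \sum_(i | P i) a i by rewrite lt_def An0 sumr_ge0.
have Bp : 0 < \sum_(i | P i) b i by rewrite lt_def Bn0 sumr_ge0.
pose x := (\sum_(i | P i) a i) / (\sum_(i | P i) b i).
have xp : 0 < x by rewrite divr_gt0.
apply: le_trans (ler_sum _ (fun i _ => ilog_ge_linear (a0 i) (b0 i) (ab i) xp)).
rewrite big_split /= -!mulr_suml sumrB -mulr_suml.
have -> : (\sum_(i | P i) b i) * x = \sum_(i | P i) a i.
  by rewrite /x mulrC -mulrA mulVf // mulr1.
by rewrite subrr mul0r addr0 ilogE.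
Qed.

Lemma log_sum_ineq_split (I : finType) (C : pred I) (a b : I -> R) :
  (forall i, 0 <= a i) -> (forall i, 0 <= b i) ->
  (forall i, a i != 0 -> b i != 0) ->
  ilog (\sum_(i | C i) a i) (\sum_(i | C i) b i)
    + ilog (\sum_(i | ~~ C i) a i) (\sum_(i | ~~ C i) b i)
  <= \sum_i ilog (a i) (b i).
Proof.
move=> a0 b0 ab; rewrite [X in _ <= X](bigID C) /=.
by apply: lerD; apply: log_sum_ineq.
Qed.

Lemma Hb_le1 (e : R) : 0 <= e -> e <= 1 -> Hb e <= 1.
Proof.
move=> e0 e1.
pose a (b : bool) := if b then e else 1 - e.
have := @log_sum_ineq _ xpredT a (fun _ => 2^-1).
rewrite !big_bool /= addrCA subrr addr0.
have -> : 2^-1 + 2^-1 = 1 :> R by field.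
rewrite !ilogV ?subr_ge0 // log22 ilogE divr1.
rewrite log21 mulr0 /Hb => h.
have {h} : 0 <= xlog2x e + e * 1 + (xlog2x (1 - e) + (1 - e) * 1).
  by apply: h => [[]|_|_ _]; rewrite /a ?subr_ge0 ?invr_ge0 ?invr_eq0.
lra.
Qed.

End Log2.

Section Information.
Variable R : realType.
Implicit Types X Y Z : finType.

Definition ent Y (u : Y -> R) : R := - \sum_y xlog2x (u y).

Definition out_dist X Y (Q : X -> R) (W : X -> Y -> R) (y : Y) : R :=
  \sum_x Q x * W x y.

Definition chan_comp X Y Z (W : X -> Y -> R) (K : Y -> Z -> R) (x : X) (z : Z) : R :=
  \sum_y W x y * K y z.

(* [I(X ; Y)] for the input law [Q] and the channel [W]. *)
Definition xinfo X Y (Q : X -> R) (W : X -> Y -> R) : R :=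
  \sum_x \sum_y ilog (Q x * W x y) (Q x * out_dist Q W y).

Lemma out_dist_ge0 X Y (Q : X -> R) (W : X -> Y -> R) y :
  (forall x, 0 <= Q x) -> (forall x y, 0 <= W x y) -> 0 <= out_dist Q W y.
Proof. by move=> Q0 W0; apply: sumr_ge0 => x _; rewrite mulr_ge0. Qed.

Lemma out_dist_ge_term X Y (Q : X -> R) (W : X -> Y -> R) x y :
  (forall x, 0 <= Q x) -> (forall x y, 0 <= W x y) -> Q x * W x y <= out_dist Q W y.
Proof.
by move=> Q0 W0; apply: ler_sum_term x _ => x'; rewrite mulr_ge0.
Qed.

Lemma out_dist_comp X Y Z (Q : X -> R) (W : X -> Y -> R) (K : Y -> Z -> R) z :
  out_dist Q (chan_comp W K) z = \sum_y out_dist Q W y * K y z.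
Proof.
rewrite /out_dist /chan_comp; under eq_bigr do rewrite mulr_sumr.
rewrite exchange_big /=; apply: eq_bigr => y _; rewrite mulr_suml.
by apply: eq_bigr => x _; rewrite mulrA.
Qed.

Lemma sum_out_dist X Y (Q : X -> R) (W : X -> Y -> R) :
  \sum_x Q x = 1 -> (forall x, \sum_y W x y = 1) -> \sum_y out_dist Q W y = 1.
Proof.
move=> Q1 W1; rewrite exchange_big /= -[RHS]Q1; apply: eq_bigr => x _.
by rewrite -mulr_sumr W1 mulr1.
Qed.

Lemma ent_le_out_dist Y (u : Y -> R) (K : Y -> Y -> R) :
  (forall y, 0 <= u y) -> (forall y y', 0 <= K y y') ->
  (forall y, \sum_y' K y y' = 1) -> (forall y', \sum_y K y y' = 1) ->
  ent u <= ent (out_dist u K).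
Proof.
move=> u0 K0 Kr Kc; rewrite /ent lerN2.
have pt y' : xlog2x (out_dist u K y') <= \sum_y K y y' * xlog2x (u y).
  have -> : xlog2x (out_dist u K y') =
      ilog (\sum_y K y y' * u y) (\sum_y K y y' * 1).
    rewrite ilogE xlog2xE (eq_bigr _ (fun y _ => mulr1 _)) Kc divr1 /out_dist.
    by under eq_bigr do rewrite mulrC.
  apply: le_trans (log_sum_ineq _ _ _ _) _.
  - by move=> y; rewrite mulr_ge0.
  - by move=> y; rewrite mulr1.
  - by move=> y; rewrite mulr1; apply: contra => /eqP ->; rewrite mul0r.
  by apply: ler_sum => y _; rewrite ilogZ // ilogE xlog2xE divr1.
apply: le_trans (ler_sum _ (fun y' _ => pt y')) _.
by rewrite exchange_big /=; apply: ler_sum => y _; rewrite -mulr_suml Kr mul1r.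
Qed.

Lemma xinfoE X Y (Q : X -> R) (W : X -> Y -> R) h :
  (forall x, 0 <= Q x) -> (forall x y, 0 <= W x y) -> \sum_x Q x = 1 ->
  (forall x, ent (W x) = h) -> xinfo Q W = ent (out_dist Q W) - h.
Proof.
move=> Q0 W0 Q1 HW.
have pt x y : ilog (Q x * W x y) (Q x * out_dist Q W y) =
    Q x * xlog2x (W x y) - Q x * W x y * log2 (out_dist Q W y).
  rewrite ilogE xlog2xE.
  have [->|qn] := eqVneq (Q x) 0; first by rewrite !mul0r subrr.
  have [->|wn] := eqVneq (W x y) 0; first by rewrite !(mulr0, mul0r) subrr.
  have qp : 0 < Q x by rewrite lt_def qn Q0.
  have wp : 0 < W x y by rewrite lt_def wn W0.
  have up : 0 < out_dist Q W y.
    exact: lt_le_trans (mulr_gt0 qp wp) (out_dist_ge_term _ _ Q0 W0).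
  have -> : Q x * W x y / (Q x * out_dist Q W y) = W x y / out_dist Q W y.
    by rewrite invfM mulrACA divff // mul1r.
  by rewrite log2_div //; ring.
rewrite /xinfo (eq_bigr _ (fun x _ => eq_bigr _ (fun y _ => pt x y))).
under eq_bigr => x _ do rewrite sumrB -mulr_sumr -[\sum_y _](opprK) -/(ent _) HW.
rewrite sumrB -mulr_suml Q1 exchange_big /= /ent.
under [X in _ - X = _]eq_bigr do rewrite -mulr_suml -xlog2xE.
lra.
Qed.

Lemma xinfo_comp_le X Y Z (Q : X -> R) (W : X -> Y -> R) (K : Y -> Z -> R) :
  (forall x, 0 <= Q x) -> (forall x y, 0 <= W x y) -> (forall y z, 0 <= K y z) ->
  (forall y, \sum_z K y z = 1) ->
  xinfo Q (chan_comp W K) <= xinfo Q W.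
Proof.
move=> Q0 W0 K0 Kr; apply: ler_sum => x _.
have pt z : ilog (Q x * chan_comp W K x z) (Q x * out_dist Q (chan_comp W K) z)
    <= \sum_y K y z * ilog (Q x * W x y) (Q x * out_dist Q W y).
  rewrite out_dist_comp /chan_comp !mulr_sumr.
  have ECW y : Q x * (W x y * K y z) = K y z * (Q x * W x y) by ring.
  have ECU y : Q x * (out_dist Q W y * K y z) = K y z * (Q x * out_dist Q W y).
    by ring.
  rewrite (eq_bigr _ (fun y _ => ECW y)) (eq_bigr _ (fun y _ => ECU y)).
  apply: le_trans (log_sum_ineq _ _ _ _) _.
  - by move=> y; rewrite !mulr_ge0.
  - by move=> y; rewrite !mulr_ge0 ?out_dist_ge0.
  - move=> y; rewrite !mulf_eq0 !negb_or => /and3P[-> qn wn] /=; rewrite qn gt_eqF //.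
    apply: lt_le_trans (out_dist_ge_term x _ Q0 W0).
    by rewrite mulr_gt0 // lt_def ?qn ?wn ?Q0 ?W0.
  by apply: ler_sum => y _; rewrite ilogZ.
apply: le_trans (ler_sum _ (fun z _ => pt z)) _.
by rewrite exchange_big /=; apply: ler_sum => y _; rewrite -mulr_suml Kr mul1r.
Qed.

End Information.

Section Message.
Variables (R : realType) (M : nat).
Hypothesis M_gt0 : (0 < M)%N.
Implicit Types X Y : finType.

Let invM_gt0 : 0 < (M%:R : R)^-1.
Proof. by rewrite invr_gt0 ltr0n. Qed.

Let sum_invM : \sum_(m < M) (M%:R : R)^-1 = 1.
Proof.
by rewrite sumr_const card_ord -[_ *+ M]mulr_natr mulVf // pnatr_eq0 -lt0n.
Qed.

Definition mix Y (P : 'I_M -> Y -> R) (y : Y) : R := (M%:R)^-1 * \sum_m P m y.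

(* [I(M ; Y)] for a uniform message [M] with conditional laws [P m]. *)
Definition minfo Y (P : 'I_M -> Y -> R) : R :=
  \sum_m \sum_y (M%:R)^-1 * ilog (P m y) (mix P y).

Lemma mix_ge0 Y (P : 'I_M -> Y -> R) y : (forall m y, 0 <= P m y) -> 0 <= mix P y.
Proof. by move=> P0; rewrite mulr_ge0 ?sumr_ge0 // ltW. Qed.

Lemma mix_gt0 Y (P : 'I_M -> Y -> R) m y :
  (forall m y, 0 <= P m y) -> 0 < P m y -> 0 < mix P y.
Proof.
move=> P0 Pp; rewrite mulr_gt0 //; apply: lt_le_trans Pp _.
by apply: ler_sum_term m _ => m'.
Qed.

Lemma minfoE Y (P : 'I_M -> Y -> R) :
  (forall m y, 0 <= P m y) ->
  minfo P = ent (mix P) - \sum_m (M%:R)^-1 * ent (P m).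
Proof.
move=> P0.
have pt m y : ilog (P m y) (mix P y) = xlog2x (P m y) - P m y * log2 (mix P y).
  rewrite ilogE xlog2xE; have [->|pn] := eqVneq (P m y) 0.
    by rewrite !mul0r subrr.
  have pp : 0 < P m y by rewrite lt_def pn P0.
  by rewrite log2_div ?(mix_gt0 P0 pp) // mulrBr.
rewrite /minfo; under eq_bigr do under eq_bigr do rewrite pt mulrBr.
under eq_bigr do rewrite sumrB -mulr_sumr.
rewrite sumrB exchange_big /= /ent.
have -> : \sum_y \sum_m (M%:R)^-1 * (P m y * log2 (mix P y)) = \sum_y xlog2x (mix P y).
  by apply: eq_bigr => y _; rewrite xlog2xE -mulr_sumr -mulr_suml mulrA.
under [X in _ = _ - X]eq_bigr do rewrite mulrN.
by rewrite sumrN opprK addrC.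
Qed.

(* [H(Y) <= H(Z)] since [K] is doubly stochastic, and by data processing
   [H(Z | M = m) - H(Y | M = m) <= hWK - hW] for every message [m]. *)
Lemma minfo_degraded_le X Y (Q : 'I_M -> X -> R) (W : X -> Y -> R) (K : Y -> Y -> R)
    (hW hWK : R) :
  (forall m x, 0 <= Q m x) -> (forall m, \sum_x Q m x = 1) ->
  (forall x y, 0 <= W x y) -> (forall y y', 0 <= K y y') ->
  (forall y, \sum_y' K y y' = 1) -> (forall y', \sum_y K y y' = 1) ->
  (forall x, ent (W x) = hW) -> (forall x, ent (chan_comp W K x) = hWK) ->
  minfo (fun m => out_dist (Q m) W) - minfo (fun m => out_dist (Q m) (chan_comp W K))
    <= hWK - hW.
Proof.
move=> Q0 Q1 W0 K0 Kr Kc HW HWK.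
have WK0 x y' : 0 <= chan_comp W K x y'.
  by apply: sumr_ge0 => y _; rewrite mulr_ge0.
have mix_comp : mix (fun m => out_dist (Q m) (chan_comp W K)) =
    out_dist (mix (fun m => out_dist (Q m) W)) K.
  apply/funext => y'; rewrite /mix; under eq_bigr do rewrite out_dist_comp.
  rewrite exchange_big /= mulr_sumr; apply: eq_bigr => y _.
  by rewrite -mulr_suml mulrA.
have ent_mix : ent (mix (fun m => out_dist (Q m) W))
    <= ent (mix (fun m => out_dist (Q m) (chan_comp W K))).
  by rewrite mix_comp; apply: ent_le_out_dist => // y; apply: mix_ge0 => m ?;
    apply: out_dist_ge0.
have ent_out m : ent (out_dist (Q m) (chan_comp W K)) - ent (out_dist (Q m) W)
    <= hWK - hW.
  have := xinfo_comp_le (Q0 m) W0 K0 Kr.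
  rewrite (xinfoE (Q0 m) W0 (Q1 m) HW) (xinfoE (Q0 m) WK0 (Q1 m) HWK); lra.
have ent_avg : \sum_m (M%:R)^-1 * ent (out_dist (Q m) (chan_comp W K))
    - \sum_m (M%:R)^-1 * ent (out_dist (Q m) W) <= hWK - hW.
  rewrite -sumrB; apply: le_trans (_ : _ <= \sum_m (M%:R)^-1 * (hWK - hW)) _.
    by apply: ler_sum => m _; rewrite -mulrBr ler_pM2l.
  by rewrite -mulr_suml sum_invM mul1r.
rewrite (minfoE (fun m y => out_dist_ge0 y (Q0 m) W0)).
by rewrite (minfoE (fun m y => out_dist_ge0 y (Q0 m) WK0)); lra.
Qed.

Lemma sum_mix Y (P : 'I_M -> Y -> R) :
  (forall m, \sum_y P m y = 1) -> \sum_y mix P y = 1.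
Proof.
move=> P1; rewrite -mulr_sumr exchange_big /= (eq_bigr _ (fun m _ => P1 m)).
by rewrite mulr_sumr (eq_bigr _ (fun m _ => mulr1 _)) sum_invM.
Qed.

Lemma minfo_jointE Y (P : 'I_M -> Y -> R) :
  minfo P = \sum_(p : 'I_M * Y) ilog ((M%:R)^-1 * P p.1 p.2) ((M%:R)^-1 * mix P p.2).
Proof.
rewrite sum_pairE; apply: eq_bigr => m _; apply: eq_bigr => y _.
by rewrite ilogZ // ltW.
Qed.

(* Fano's inequality: split the joint form of [I(M ; Y)] between the correctly
   and the wrongly decoded pairs [(m, y)]. *)
Lemma fano_minfo Y (P : 'I_M -> Y -> R) (dec : Y -> 'I_M) :
  (forall m y, 0 <= P m y) -> (forall m, \sum_y P m y = 1) ->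
  (1 - \sum_m \sum_y (M%:R)^-1 * P m y * (dec y != m)%:R) * log2 M%:R - 1
    <= minfo P.
Proof.
move=> P0 P1; set e := \sum_m \sum_y _.
pose a (p : 'I_M * Y) := (M%:R)^-1 * P p.1 p.2.
pose b (p : 'I_M * Y) := (M%:R)^-1 * mix P p.2.
pose ok (p : 'I_M * Y) := dec p.2 == p.1.
have a0 p : 0 <= a p by rewrite mulr_ge0 // ltW.
have b0 p : 0 <= b p by rewrite mulr_ge0 ?mix_ge0 // ltW.
have ab p : a p != 0 -> b p != 0.
  rewrite mulf_eq0 negb_or => /andP[_ pn]; rewrite mulf_neq0 ?gt_eqF //.
  by apply: (mix_gt0 (m := p.1) P0); rewrite lt_def pn P0.
have sum_a : \sum_p a p = 1.
  rewrite sum_pairE -[RHS]sum_invM; apply: eq_bigr => m _.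
  by rewrite -mulr_sumr P1 mulr1.
have sum_b : \sum_p b p = 1.
  rewrite sum_pairE -[RHS]sum_invM; apply: eq_bigr => m _.
  by rewrite -mulr_sumr sum_mix // mulr1.
have sum_a_err : \sum_(p | ~~ ok p) a p = e.
  rewrite /e pair_bigA big_mkcond; apply: eq_bigr => -[m y] _ /=.
  by rewrite /ok /a /=; case: (_ == _); rewrite ?mulr1 ?mulr0.
have sum_b_ok : \sum_(p | ok p) b p = (M%:R)^-1.
  transitivity (\sum_y (M%:R)^-1 * mix P y); last by rewrite -mulr_sumr sum_mix ?mulr1.
  rewrite big_mkcond sum_pairE exchange_big /=; apply: eq_bigr => y _.
  by rewrite -big_mkcond /= (big_pred1 (dec y)) // => m; rewrite /ok /= eq_sym.
have sum_a_ok : \sum_(p | ok p) a p = 1 - e.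
  by rewrite -sum_a_err -sum_a [\sum_p a p](bigID ok) /= addrK.
have sum_b_err : \sum_(p | ~~ ok p) b p = 1 - (M%:R)^-1.
  by rewrite -sum_b_ok -sum_b [\sum_p b p](bigID ok) /= addrC addrK.
have e0 : 0 <= e by rewrite -sum_a_err sumr_ge0.
have e1 : e <= 1 by rewrite -subr_ge0 -sum_a_ok sumr_ge0.
have err_part : xlog2x e <= ilog e (1 - (M%:R)^-1).
  apply: xlog2x_le_ilog => //; first by rewrite subr_ge0 invf_le1 ?ltr0n // ler1n.
  by rewrite -sum_a_err -sum_b_err; apply: psumr_neq0_supp.
have := log_sum_ineq_split ok a0 b0 ab.
rewrite -minfo_jointE sum_a_ok sum_b_ok sum_a_err sum_b_err ilogV ?subr_ge0 ?ltr0n //.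
by have := Hb_le1 e0 e1; rewrite /Hb; lra.
Qed.

End Message.

Section BlockFading.
Variable R : realType.
Implicit Types (pa pb ca cb ra rb : R) (N B M : nat).

Lemma sum_ffun_prod (I : finType) (F : I -> bool -> R) :
  \sum_(f : {ffun I -> bool}) \prod_i F i (f i) = \prod_i (F i true + F i false).
Proof. by rewrite -bigA_distr_bigA; apply: eq_bigr => i _; rewrite big_bool. Qed.

Lemma xlog2x_prod (I : finType) (g : I -> R) : (forall i, 0 <= g i) ->
  xlog2x (\prod_i g i) = \sum_j \prod_i (if i == j then xlog2x (g i) else g i).
Proof.
move=> g0; have [k /eqP gk0|g_neq0] := pickP (fun i => g i == 0).
  rewrite (bigD1 k) //= gk0 mul0r xlog2xE mul0r big1 // => j _.
  by rewrite (bigD1 k) //=; case: (k == j); rewrite gk0 ?xlog2xE !mul0r.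
have gp i : 0 < g i by rewrite lt_def g0 g_neq0.
rewrite xlog2xE log2_prod // mulr_sumr; apply: eq_bigr => j _.
rewrite (bigD1 j) //= [in RHS](bigD1 j) //= eqxx xlog2xE.
under [in RHS]eq_bigr => i /negbTE ij do rewrite ij.
ring.
Qed.

Definition bsc (a : R) (u v : bool) : R := if u == v then 1 - a else a.

Lemma bsc_xover_ge0 pa pb b u v : 0 <= pa <= 1 -> 0 <= pb <= 1 ->
  0 <= bsc (xover pa pb b) u v.
Proof.
by move=> /andP[? ?] /andP[? ?]; rewrite /bsc /xover; case: b; case: eqP; lra.
Qed.

Lemma Wbf_ge0 pa pb N B (s : states B) (x y : word N B) :
  0 <= pa <= 1 -> 0 <= pb <= 1 -> 0 <= Wbf pa pb s x y.
Proof. by move=> ha hb; apply: prodr_ge0 => i _; apply: bsc_xover_ge0. Qed.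

Lemma Wbf_sum pa pb N B (s : states B) (x : word N B) : \sum_y Wbf pa pb s x y = 1.
Proof.
rewrite /Wbf (sum_ffun_prod (fun i b => bsc (xover pa pb (s i.1)) (x i) b)).
by apply: big1 => i _; rewrite /bsc; case: (x i) => /=; ring.
Qed.

Lemma Wbf_sum_col pa pb N B (s : states B) (y : word N B) :
  \sum_x Wbf pa pb s x y = 1.
Proof.
by rewrite -(Wbf_sum pa pb s y); apply: eq_bigr => x _; apply: eq_bigr => i _;
  rewrite eq_sym.
Qed.

Definition block_ent pa pb N B (s : states B) : R :=
  \sum_(i : 'I_B * 'I_N) Hb (xover pa pb (s i.1)).

Lemma ent_Wbf pa pb N B (s : states B) (x : word N B) :
  0 <= pa <= 1 -> 0 <= pb <= 1 -> ent (Wbf pa pb s x) = block_ent pa pb N s.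
Proof.
move=> ha hb; pose W i := bsc (xover pa pb (s i.1)) (x i).
rewrite /ent /Wbf -/W.
have W0 y i : 0 <= W i (y i) by apply: bsc_xover_ge0.
under eq_bigr => y _ do rewrite (xlog2x_prod (W0 y)).
rewrite exchange_big /= -sumrN; apply: eq_bigr => j _.
rewrite (sum_ffun_prod (fun i b => if i == j then xlog2x (W i b) else W i b)).
rewrite (bigD1 j) //= eqxx big1 => [|i /negbTE ->]; last first.
  by rewrite /W /bsc; case: (x i) => /=; ring.
by rewrite mulr1 /Hb /W /bsc; case: (x j) => /=; lra.
Qed.

Lemma Wbf_cascade pa pb ca cb ra rb N B (s : states B) :
  ra = pa + ca - 2 * pa * ca -> rb = pb + cb - 2 * pb * cb ->
  chan_comp (Wbf pa pb s) (Wbf ca cb s) = Wbf ra rb s :> (word N B -> _ -> R).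
Proof.
move=> -> ->; apply/funext => x; apply/funext => z; rewrite /chan_comp.
under eq_bigr do rewrite /Wbf -big_split /=.
rewrite (sum_ffun_prod (fun i b => bsc (xover pa pb (s i.1)) (x i) b *
                                  bsc (xover ca cb (s i.1)) b (z i))).
apply: eq_bigr => i _; rewrite /bsc /xover.
by case: (s i.1); case: (x i); case: (z i) => /=; ring.
Qed.

(* The crossover [c] with [b = a + c - 2 a c]; when [a = 1/2] we must have
   [b = 1/2] and any [c] works. *)
Definition degrading_xover (a b : R) : R :=
  if a == 1 / 2 then 0 else (b - a) / (1 - 2 * a).

Lemma degrading_xoverP (a b : R) : 0 <= a -> a <= b -> b <= 1 / 2 ->
  0 <= degrading_xover a b <= 1 /\
  b = a + degrading_xover a b - 2 * a * degrading_xover a b.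
Proof.
move=> a0 ab b2; rewrite /degrading_xover; case: eqP => [ha|ha].
  by split; [rewrite lexx ler01 | lra].
have d0 : 0 < 1 - 2 * a.
  have : a != 1 / 2 by apply/eqP.
  rewrite neq_lt => /orP[|]; lra.
split; last by field; lra.
by rewrite divr_ge0 ?ler_pdivrMr //=; lra.
Qed.

Lemma Pstate_ge0 (q1 : R) B (s : states B) : 0 <= q1 -> q1 <= 1 -> 0 <= Pstate q1 s.
Proof. by move=> ? ?; apply: prodr_ge0 => k _; rewrite /st_prob; case: (s k); lra. Qed.

Lemma sum_Pstate_at (q1 : R) B (f : bool -> R) (k0 : 'I_B) :
  \sum_(s : states B) Pstate q1 s * f (s k0) = q1 * f false + (1 - q1) * f true.
Proof.
pose F k b := st_prob q1 b * (if k == k0 then f b else 1).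
have Fprod s : Pstate q1 s * f (s k0) = \prod_k F k (s k).
  rewrite big_split /=; congr (_ * _).
  by rewrite (bigD1 k0) //= eqxx big1 ?mulr1 // => k /negbTE ->.
rewrite (eq_bigr _ (fun s _ => Fprod s)) sum_ffun_prod.
rewrite (bigD1 k0) //= big1 => [|k /negbTE kk0]; last by rewrite /F kk0 /st_prob; ring.
by rewrite /F eqxx mulr1 /st_prob; ring.
Qed.

Lemma sum_Pstate (q1 : R) B : \sum_(s : states B) Pstate q1 s = 1.
Proof.
case: B => [|B].
  rewrite (eq_bigr (fun _ => 1)) => [|s _]; last by rewrite /Pstate big_ord0.
  by rewrite sumr_const card_ffun card_ord card_bool expn0.
have := sum_Pstate_at q1 (fun _ => 1) (@ord0 B).
by under eq_bigr do rewrite mulr1; move=> ->; ring.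
Qed.

Lemma sum_Pstate_block_ent (q1 : R) pa pb N B :
  \sum_(s : states B) Pstate q1 s * block_ent pa pb N s =
  (N * B)%:R * (q1 * Hb pa + (1 - q1) * Hb pb).
Proof.
under eq_bigr do rewrite /block_ent mulr_sumr.
rewrite exchange_big /=.
rewrite (eq_bigr _ (fun i _ => sum_Pstate_at q1 (fun b => Hb (xover pa pb b)) i.1)).
by rewrite sumr_const card_prod !card_ord mulr_natl mulnC.
Qed.

End BlockFading.

Lemma rate_ge0 (R : realType) N B M : (0 < M)%N -> 0 <= rate R N B M.
Proof.
by move=> M_gt0; rewrite divr_ge0 // mulr_ge0 ?invr_ge0 ?ln_ge0 ?ler1n ?ltW ?ln2_gt0.
Qed.

Section Converse.
Variables (R : realType) (q1 p1 p2 ps1 ps2 : R).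
Hypotheses (q1_ge0 : 0 <= q1) (q1_le1 : q1 <= 1).
Hypotheses (p1_ge0 : 0 <= p1) (p1_le_ps1 : p1 <= ps1) (ps1_le_half : ps1 <= 1 / 2).
Hypotheses (p2_ge0 : 0 <= p2) (p2_le_ps2 : p2 <= ps2) (ps2_le_half : ps2 <= 1 / 2).

Let le_half_01 (a : R) : 0 <= a -> a <= 1 / 2 -> 0 <= a <= 1.
Proof. by move=> ? ?; apply/andP; split; lra. Qed.

Let p1_01 := le_half_01 p1_ge0 (le_trans p1_le_ps1 ps1_le_half).
Let p2_01 := le_half_01 p2_ge0 (le_trans p2_le_ps2 ps2_le_half).
Let ps1_01 := le_half_01 (le_trans p1_ge0 p1_le_ps1) ps1_le_half.
Let ps2_01 := le_half_01 (le_trans p2_ge0 p2_le_ps2) ps2_le_half.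

Let secrecy_gap := q1 * (Hb ps1 - Hb p1) + (1 - q1) * (Hb ps2 - Hb p2).

Lemma err_probE N B M (c : Defs.code R N B M) :
  err_prob q1 p1 p2 c = \sum_(s : states B) Pstate q1 s *
    \sum_m \sum_y (M%:R)^-1 * out_dist (enc c m) (Wbf p1 p2 s) y * (dec c y s != m)%:R.
Proof.
rewrite /err_prob exchange_big /=; apply: eq_bigr => s _.
rewrite mulr_sumr; apply: eq_bigr => m _; rewrite mulr_sumr exchange_big /=.
apply: eq_bigr => y _; rewrite /out_dist mulr_sumr !mulr_suml mulr_sumr.
by apply: eq_bigr => x _; ring.
Qed.

Lemma state_secrecy_bound N B M (c : Defs.code R N B M) (s : states B) :
  (0 < M)%N ->
  (1 - \sum_m \sum_y (M%:R)^-1 * out_dist (enc c m) (Wbf p1 p2 s) y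
         * (dec c y s != m)%:R) * log2 M%:R - 1
    - minfo (fun m => out_dist (enc c m) (Wbf ps1 ps2 s))
  <= block_ent ps1 ps2 N s - block_ent p1 p2 N s.
Proof.
move=> M_gt0.
have [[c1_01 ps1E] [c2_01 ps2E]] :=
  (degrading_xoverP p1_ge0 p1_le_ps1 ps1_le_half,
   degrading_xoverP p2_ge0 p2_le_ps2 ps2_le_half).
set c1 := degrading_xover p1 ps1 in c1_01 ps1E.
set c2 := degrading_xover p2 ps2 in c2_01 ps2E.
have Eve : Wbf ps1 ps2 s = chan_comp (Wbf p1 p2 s) (Wbf c1 c2 s)
    :> (word N B -> _ -> R).
  by rewrite (Wbf_cascade _ _ ps1E ps2E).
have Bob0 (x y : word N B) : 0 <= Wbf p1 p2 s x y := Wbf_ge0 s x y p1_01 p2_01.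
have Bob := fano_minfo M_gt0 (fun y => dec c y s)
  (P := fun m => out_dist (enc c m) (Wbf p1 p2 s))
  (fun m y => out_dist_ge0 y (enc_ge0 c m) Bob0)
  (fun m => sum_out_dist (enc_sum1 c m) (@Wbf_sum _ _ _ _ _ s)).
have Eve_ent (x : word N B) :
    ent (chan_comp (Wbf p1 p2 s) (Wbf c1 c2 s) x) = block_ent ps1 ps2 N s.
  by rewrite -Eve ent_Wbf.
have := minfo_degraded_le M_gt0 (enc_ge0 c) (enc_sum1 c) Bob0
  (fun y y' => Wbf_ge0 s y y' c1_01 c2_01) (@Wbf_sum _ _ _ _ _ s)
  (@Wbf_sum_col _ _ _ _ _ s)
  (fun x => ent_Wbf s x p1_01 p2_01) Eve_ent.
rewrite -Eve; lra.
Qed.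

Lemma converse_bound N B M (c : Defs.code R N B M) : (0 < M)%N ->
  (1 - err_prob q1 p1 p2 c) * log2 M%:R
    <= 1 + leakage q1 ps1 ps2 c + (N * B)%:R * secrecy_gap.
Proof.
move=> M_gt0; pose lM := log2 (M%:R : R); pose P := Pstate q1 (B := B).
pose e s := \sum_m \sum_y
  (M%:R)^-1 * out_dist (enc c m) (Wbf p1 p2 s) y * (dec c y s != m)%:R.
pose L s := minfo (fun m => out_dist (enc c m) (Wbf ps1 ps2 s)).
have per_state : \sum_s P s * ((1 - e s) * lM - 1 - L s)
    <= \sum_s P s * (block_ent ps1 ps2 N s - block_ent p1 p2 N s).
  apply: ler_sum => s _; rewrite ler_wpM2l ?Pstate_ge0 //.
  exact: state_secrecy_bound.
have lhsE : \sum_s P s * ((1 - e s) * lM - 1 - L s)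
    = (1 - err_prob q1 p1 p2 c) * lM - 1 - leakage q1 ps1 ps2 c.
  rewrite err_probE (_ : leakage _ _ _ _ = \sum_s P s * L s) //.
  rewrite (eq_bigr (fun s => P s * lM - P s * e s * lM - P s - P s * L s)).
    by rewrite !sumrB -!mulr_suml sum_Pstate; ring.
  by move=> s _; ring.
have rhsE : \sum_s P s * (block_ent ps1 ps2 N s - block_ent p1 p2 N s)
    = (N * B)%:R * secrecy_gap.
  under eq_bigr do rewrite mulrBr.
  by rewrite sumrB !sum_Pstate_block_ent /secrecy_gap; ring.
by move: per_state; rewrite lhsE rhsE /lM; lra.
Qed.

Lemma rate_bound N B M (c : Defs.code R N B M) :
  (0 < N)%N -> (0 < B)%N -> (0 < M)%N ->
  (1 - err_prob q1 p1 p2 c) * rate R N B M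
    <= ((N * B)%:R)^-1 + leakage q1 ps1 ps2 c / (N * B)%:R + secrecy_gap.
Proof.
move=> N_gt0 B_gt0 M_gt0.
have NB_gt0 : 0 < (N * B)%:R :> R by rewrite ltr0n muln_gt0 N_gt0.
rewrite /rate mulrA ler_pdivrMr //.
have -> : (((N * B)%:R)^-1 + leakage q1 ps1 ps2 c / (N * B)%:R + secrecy_gap)
    * (N * B)%:R = 1 + leakage q1 ps1 ps2 c + (N * B)%:R * secrecy_gap.
  by field; rewrite !pnatr_eq0 -!lt0n B_gt0.
exact: converse_bound.
Qed.

End Converse.

Lemma le_of_vanishing_slack (R : realFieldType) (r C : R) :
  (forall eps, 0 < eps -> eps <= 1 / 2 -> (1 - eps) * (r - eps) <= C + 2 * eps) ->
  r <= C.
Proof.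
move=> slack; apply/ler_addgt0Pr => d d_gt0.
have r3_gt0 : 0 < `|r| + 3 by rewrite ltr_pwDr.
pose eps := Num.min (1 / 2) (d / (`|r| + 3)).
have eps_gt0 : 0 < eps by rewrite lt_min divr_gt0 ?divr_gt0.
have eps_le_half : eps <= 1 / 2 by rewrite ge_min lexx.
have eps_small : eps * (`|r| + 3) <= d.
  by rewrite -ler_pdivlMr // ge_min lexx orbT.
have := slack eps eps_gt0 eps_le_half.
have : eps * r <= eps * `|r| by rewrite ler_wpM2l ?ler_norm ?ltW.
have : 0 <= eps * eps by rewrite mulr_ge0 ?ltW.
nra.
Qed.

Theorem lemma1 (R : realType) (q1 q2 p1 p2 ps1 ps2 : R) :
  0 <= q1 -> q1 <= 1 -> q2 = 1 - q1 ->
  0 <= p1 -> p1 <= p2 -> p2 <= 1 / 2 ->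
  0 <= ps1 -> ps1 <= ps2 -> ps2 <= 1 / 2 ->
  p1 <= ps1 -> p2 <= ps2 ->
  (CsCSID q1 p1 p2 ps1 ps2
     <= (q1 * (Hb ps1 - Hb p1) + q2 * (Hb ps2 - Hb p2))%:E)%E.
Proof.
move=> q1_ge0 q1_le1 -> p1_ge0 p1_le_p2 _ _ ps1_le_ps2 ps2_le_half p1_le_ps1 p2_le_ps2.
have bound := rate_bound q1_ge0 q1_le1 p1_ge0 p1_le_ps1
  (le_trans ps1_le_ps2 ps2_le_half) (le_trans p1_ge0 p1_le_p2) p2_le_ps2 ps2_le_half.
apply: ge_ereal_sup => _ [r r_achievable <-]; rewrite lee_fin.
apply: le_of_vanishing_slack => eps eps_gt0 eps_le_half.
have [N [B [M [c [[N_gt0 B_ge M_gt0] [rate_ge err_le leak_le]]]]]] :=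
  r_achievable eps eps_gt0 1%N (Num.Def.truncn eps^-1).+1.
have B_gt0 : (0 < B)%N := leq_trans (ltn0Sn _) B_ge.
have NB_inv_le : ((N * B)%:R)^-1 <= eps.
  rewrite invf_ple ?posrE ?ltr0n ?muln_gt0 ?N_gt0 //.
  apply/ltW/(lt_le_trans (truncnS_gt _)).
  by rewrite ler_nat (leq_trans B_ge) // leq_pmull.
have := bound _ _ _ c N_gt0 B_gt0 M_gt0.
have : (1 - eps) * (r - eps) <= (1 - err_prob q1 p1 p2 c) * rate R N B M.
  apply: le_trans (ler_wpM2l _ rate_ge) (ler_wpM2r (rate_ge0 R N B M_gt0) _); lra.
lra.
Qed.
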